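(* Let $W>0$ and define $C(x)=W\log_2(1+x)$ for $x\ge 0$. Consider a monitoring receiver that simultaneously receives, over a two-user Gaussian multiple access channel, a transmission from an announcer $A$ with fixed rate $R_A\ge 0$ and received SNR $\gamma_A\ge 0$, and a downlink transmission from a base station $B$ with received SNR $\gamma_B\ge 0$. Let $\Gamma_A=C^{-1}(R_A)=2^{R_A/W}-1$. Suppose $B$ knows $R_A$ and $\gamma_B$ (but not $\gamma_A$) and selects its rate as $R_B=C(\Gamma_B)$ with $\Gamma_B=\frac{\gamma_B}{1+\Gamma_A}$. Then the decodability of $A$'s transmission depends solely on whether $R_A\le C(\gamma_A)$ (equivalently $\gamma_A\ge\Gamma_A$): whenever $R_A\le C(\gamma_A)$, the rate pair $(R_A,R_B)$ satisfies all three multiple access channel inequalities $$R_A\le C(\gamma_A),\qquad R_B\le C(\gamma_B),\qquad R_A+R_B\le C(\gamma_A+\gamma_B),$$ so both transmissions can be decoded, while if $R_A> C(\gamma_A)$ the transmission of $A$ cannot be decoded.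
   Context: Decoding is in the information-theoretic sense with Gaussian codebooks: the transmission of $A$ is decodable at the receiver either by first decoding $B$ treating $A$ as noise, subtracting it, and then decoding $A$ in noise (possible iff $R_A\le C(\gamma_A)$), or by joint decoding of both transmissions, which is possible iff all three multiple access channel inequalities above hold. *)

From Stdlib Require Import Reals.
Open Scope R_scope.

Definition Cap (W x : R) : R := W * (ln (1 + x) / ln 2).

Definition Cinv (W r : R) : R := Rpower 2 (r / W) - 1.

Definition mac_region (W RA RB gA gB : R) : Prop :=
  RA <= Cap W gA /\ RB <= Cap W gB /\ RA + RB <= Cap W (gA + gB).

(* Decodability of A's transmission: either by SIC (decode B treating A as
   noise, subtract, decode A; possible iff RA <= C(gA)), or by joint decoding
   (possible iff all three MAC inequalities hold). *)
Definition decodable_A (W RA RB gA gB : R) : Prop :=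
  RA <= Cap W gA \/ mac_region W RA RB gA gB.

(* With Gamma_A = C^{-1}(R_A), the announcer's rate is R_A = C(Gamma_A), and
   the base station's choice Gamma_B = gamma_B / (1 + Gamma_A) is exactly the
   SNR that makes C(Gamma_A) + C(Gamma_B) = C(Gamma_A + gamma_B), since
   (1 + Gamma_A)(1 + Gamma_B) = 1 + Gamma_A + gamma_B.  Hence, as soon as
   gamma_A >= Gamma_A, monotonicity of C gives all three MAC inequalities;
   and both decoding strategies need R_A <= C(gamma_A) anyway. *)
From Stdlib Require Import Reals Lra.
Open Scope R_scope.

Lemma ln2_pos : 0 < ln 2.
Proof. rewrite <- ln_1; apply ln_increasing; lra. Qed.

Lemma Cap_le_compat W x y : 0 < W -> -1 < x -> x <= y -> Cap W x <= Cap W y.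
Proof.
  intros HW Hx Hxy; unfold Cap, Rdiv.
  apply Rmult_le_compat_l; [lra|].
  apply Rmult_le_compat_r; [left; apply Rinv_0_lt_compat, ln2_pos|].
  destruct (Rle_lt_or_eq_dec x y Hxy) as [Hlt|Heq].
  - left; apply ln_increasing; lra.
  - rewrite Heq; lra.
Qed.

Lemma Cap_lt_compat W x y : 0 < W -> -1 < x -> x < y -> Cap W x < Cap W y.
Proof.
  intros HW Hx Hxy; unfold Cap, Rdiv.
  apply Rmult_lt_compat_l; [lra|].
  apply Rmult_lt_compat_r; [apply Rinv_0_lt_compat, ln2_pos|].
  apply ln_increasing; lra.
Qed.

Lemma div_ge0 a b : 0 <= a -> 0 < b -> 0 <= a / b.
Proof. intros Ha Hb; apply Rmult_le_pos; [|left; apply Rinv_0_lt_compat]; assumption. Qed.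

Lemma one_plus_Cinv W r : 1 + Cinv W r = exp (r / W * ln 2).
Proof. unfold Cinv, Rpower; ring. Qed.

Lemma Cinv_ge0 W r : 0 < W -> 0 <= r -> 0 <= Cinv W r.
Proof.
  intros HW Hr.
  enough (1 <= 1 + Cinv W r) by lra.
  rewrite one_plus_Cinv, <- exp_0.
  assert (He : 0 <= r / W * ln 2).
  { apply Rmult_le_pos; [apply div_ge0|left; apply ln2_pos]; lra. }
  destruct (Rle_lt_or_eq_dec _ _ He) as [Hlt|Heq].
  - left; apply exp_increasing, Hlt.
  - rewrite <- Heq; lra.
Qed.

Lemma Cap_Cinv W r : 0 < W -> Cap W (Cinv W r) = r.
Proof.
  intros HW; unfold Cap; rewrite one_plus_Cinv, ln_exp.
  pose proof ln2_pos; field; lra.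
Qed.

Lemma Cap_le_iff_Cinv_le W r g :
  0 < W -> 0 <= r -> 0 <= g -> r <= Cap W g <-> Cinv W r <= g.
Proof.
  intros HW Hr Hg; pose proof (Cinv_ge0 W r HW Hr) as HG.
  rewrite <- (Cap_Cinv W r HW) at 1.
  split; intros H.
  - destruct (Rlt_or_le g (Cinv W r)) as [Hlt|]; [|assumption].
    pose proof (Cap_lt_compat W g (Cinv W r) HW ltac:(lra) Hlt); lra.
  - apply Cap_le_compat; lra.
Qed.

Lemma Cap_add_div W x g :
  0 < W -> -1 < x -> 0 <= g -> Cap W x + Cap W (g / (1 + x)) = Cap W (x + g).
Proof.
  intros HW Hx Hg; unfold Cap.
  assert (Hq : 0 <= g / (1 + x)) by (apply div_ge0; lra).
  replace (1 + (x + g)) with ((1 + x) * (1 + g / (1 + x))) by (field; lra).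
  rewrite ln_mult by lra.
  pose proof ln2_pos; field; lra.
Qed.

Lemma Cap_div_le W x g :
  0 < W -> 0 <= x -> 0 <= g -> Cap W (g / (1 + x)) <= Cap W g.
Proof.
  intros HW Hx Hg; apply Cap_le_compat; [lra| |].
  - enough (0 <= g / (1 + x)) by lra; apply div_ge0; lra.
  - apply (Rmult_le_reg_r (1 + x)); [lra|].
    unfold Rdiv; rewrite Rmult_assoc, Rinv_l by lra; nra.
Qed.

Lemma decodable_A_iff W RA RB gA gB :
  decodable_A W RA RB gA gB <-> RA <= Cap W gA.
Proof. unfold decodable_A, mac_region; tauto. Qed.

Lemma mac_region_announced_rate W RA gA gB :
  0 < W -> 0 <= RA -> 0 <= gA -> 0 <= gB -> RA <= Cap W gA ->
  mac_region W RA (Cap W (gB / (1 + Cinv W RA))) gA gB.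
Proof.
  intros HW HRA HgA HgB HA.
  pose proof (Cinv_ge0 W RA HW HRA) as HG.
  assert (HGle : Cinv W RA <= gA) by (apply (Cap_le_iff_Cinv_le W RA gA); assumption).
  split; [exact HA|split].
  - apply Cap_div_le; assumption.
  - rewrite <- (Cap_Cinv W RA HW) at 1.
    rewrite Cap_add_div by lra.
    apply Cap_le_compat; lra.
Qed.

Theorem corollary1 (W RA gA gB : R) :
  0 < W -> 0 <= RA -> 0 <= gA -> 0 <= gB ->
  let GammaA := Cinv W RA in
  let GammaB := gB / (1 + GammaA) in
  let RB := Cap W GammaB in
  (decodable_A W RA RB gA gB <-> RA <= Cap W gA) /\
  (RA <= Cap W gA <-> gA >= GammaA) /\
  (RA <= Cap W gA -> mac_region W RA RB gA gB) /\
  (RA > Cap W gA -> ~ decodable_A W RA RB gA gB).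
Proof.
  intros HW HRA HgA HgB GammaA GammaB RB.
  split; [apply decodable_A_iff|].
  split; [rewrite Cap_le_iff_Cinv_le by assumption; unfold GammaA; lra|].
  split; [apply mac_region_announced_rate; assumption|].
  rewrite decodable_A_iff; lra.
Qed.
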